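(* Let $n\ge1$ and $P=\Phi^+(A_n)=\{(i,j)\colon 1\le i,j\le n,\ i+j\ge n+1\}$. Fix $k\in\{n-1,n-3,\dots,-(n-3),-(n-1)\}$. Then \[2\sum_{\substack{(i,j)\in P\\ j-i=k}}\mathbb{1}_{(i,j)}-\sum_{\substack{(i,j)\in P\\ j-i=k-1}}\mathbb{1}_{(i,j)}-\sum_{\substack{(i,j)\in P\\ j-i=k+1}}\mathbb{1}_{(i,j)}\equiv 1.\]
   Context: $P$ is ordered by $(i,j)\le(i',j')$ iff $i\le i'$ and $j\le j'$. $\mathcal{J}(P)$ is the set of order ideals of $P$. For $x\in P$, $I\in\mathcal{J}(P)$: $\mathbb{1}_x(I)=1$ if $x\in I$, else $0$; $T_x^+(I)=1$ if $x$ is a minimal element of $P\setminus I$, else $0$; $T_x^-(I)=1$ if $x$ is a maximal element of $I$, else $0$; $T_x=T_x^+-T_x^-$. For $f,g\colon\mathcal{J}(P)\to\mathbb{R}$, $f\equiv g$ means $f-g=\sum_{x\in P}c_xT_x$ for some real constants $c_x$; a real number denotes the corresponding constant function. *)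

From HB Require Import structures.
From mathcomp Require Import all_boot all_order all_algebra.
From mathcomp Require Import reals.
Set Implicit Arguments. Unset Strict Implicit. Unset Printing Implicit Defensive.
Import Order.TTheory GRing.Theory Num.Theory.
Local Open Scope ring_scope.

(* Points (i,j) with 1 <= i,j <= n are encoded 0-indexed as (i-1, j-1) : 'I_n * 'I_n. *)
Definition pt (n : nat) := ('I_n * 'I_n)%type.

(* Membership in P = Phi^+(A_n): i + j >= n + 1, i.e. (i-1)+(j-1) >= n-1. *)
Definition inP (n : nat) (x : pt n) : bool := (n.-1 <= x.1 + x.2)%N.

Definition ple (n : nat) (x y : pt n) : bool := (x.1 <= y.1)%N && (x.2 <= y.2)%N.

Definition is_ideal (n : nat) (I : {set pt n}) : Prop :=
  (forall x, x \in I -> inP x) /\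
  (forall x y, x \in I -> inP y -> ple y x -> y \in I).

Section Toggles.
Variable (R : realType) (n : nat).

Definition ind (x : pt n) (I : {set pt n}) : R := (x \in I)%:R.

Definition Tplus (x : pt n) (I : {set pt n}) : R :=
  [&& inP x, x \notin I &
      [forall y : pt n, (inP y && (y \notin I) && ple y x) ==> (y == x)]]%:R.

Definition Tminus (x : pt n) (I : {set pt n}) : R :=
  [&& x \in I & [forall y : pt n, ((y \in I) && ple x y) ==> (y == x)]]%:R.

Definition Tog (x : pt n) (I : {set pt n}) : R := Tplus x I - Tminus x I.

Definition toggle_equiv (f g : {set pt n} -> R) : Prop :=
  exists c : pt n -> R, forall I : {set pt n}, is_ideal I ->
    f I - g I = \sum_(x : pt n | inP x) c x * Tog x I.

Definition diag_sum (d : int) (I : {set pt n}) : R :=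
  \sum_(x : pt n | inP x && ((x.2 : int) - (x.1 : int) == d)) ind x I.

End Toggles.

From HB Require Import structures.
From mathcomp Require Import all_boot all_order all_algebra.
From mathcomp Require Import reals.
From mathcomp Require Import zify lra.
Set Implicit Arguments. Unset Strict Implicit. Unset Printing Implicit Defensive.
Import Order.TTheory GRing.Theory Num.Theory.
Local Open Scope ring_scope.

(* For (a, b) in P the four-point identity
     1_(a+1,b+1) + 1_(a,b) - 1_(a,b+1) - 1_(a+1,b) = T^-_(a,b) - T^+_(a+1,b+1)
   holds on order ideals, reading indicators and toggles at points outside the
   grid as 0.  Summed along the diagonal j - i = k from its lowest point x0,
   which lies on the antidiagonal i + j = n + 1, both sides telescope: the left
   side becomes 2 S_k - S_(k-1) - S_(k+1) - 1_x0 and the right side becomes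
   T^+_x0 - (sum of T_x over the diagonal).  Since x0 is minimal in P,
   T^+_x0 = 1 - 1_x0. *)

Section Extension.
Variables (R : realType) (n : nat).

Definition pt_at (a b : nat) : option (pt n) :=
  match insub a, insub b with Some i, Some j => Some (i, j) | _, _ => None end.

Variant pt_at_spec (a b : nat) : option (pt n) -> Type :=
  | PtAt (x : pt n) of x.1 = a :> nat & x.2 = b :> nat : pt_at_spec a b (Some x)
  | PtAtOut of (n <= a)%N || (n <= b)%N : pt_at_spec a b None.

Lemma pt_atP a b : pt_at_spec a b (pt_at a b).
Proof.
rewrite /pt_at; case: (@insubP _ _ 'I_n a) => [i _ ia | /negbTE ha];
  case: (@insubP _ _ 'I_n b) => [j _ jb | /negbTE hb];
  by [exact: PtAt | apply: PtAtOut; lia].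
Qed.

Lemma pt_eqE (x y : pt n) : (x == y) = (x.1 == y.1 :> nat) && (x.2 == y.2 :> nat).
Proof. by []. Qed.

Lemma pt_at_eq_some a b (x : pt n) : (pt_at a b == Some x) = (a == x.1) && (b == x.2).
Proof.
case: pt_atP => [y <- <- | out]; first by rewrite (inj_eq (@Some_inj _)) pt_eqE.
by apply/esym/negbTE; have := ltn_ord x.1; have := ltn_ord x.2; lia.
Qed.

Lemma pt_at_coords (x : pt n) : pt_at x.1 x.2 = Some x.
Proof. by apply/eqP; rewrite pt_at_eq_some !eqxx. Qed.

Definition extend (F : pt n -> R) (a b : nat) : R := oapp F 0 (pt_at a b).

Lemma extend_sum F a b : extend F a b = \sum_(x | pt_at a b == Some x) F x.
Proof.
rewrite /extend; case: pt_atP => [y _ _ | _] /=; last by rewrite big_pred0.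
by rewrite (big_pred1 y) // => x; rewrite /= (inj_eq (@Some_inj _)) eq_sym.
Qed.

Definition ray_sum (F : pt n -> R) (a b : nat) : R :=
  \sum_(t < n) extend F (a + t) (b + t).

Lemma ray_sumB F G a b :
  ray_sum (fun x => F x - G x) a b = ray_sum F a b - ray_sum G a b.
Proof.
rewrite /ray_sum -sumrB; apply: eq_bigr => t _.
by rewrite /extend; case: pt_at => //=; rewrite subr0.
Qed.

Lemma ray_sum_succ F a b : ray_sum F a.+1 b.+1 = ray_sum F a b - extend F a b.
Proof.
have end0 : extend F (a + n) (b + n) = 0.
  by rewrite /extend; case: pt_atP => // x ha _; have := ltn_ord x.1; lia.
have := telescope_sumr (fun t => extend F (a + t) (b + t)) (leq0n n).
rewrite sumrB !big_mkord end0 !addn0 /ray_sum => tele.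
under [LHS]eq_bigr do rewrite !addSnnS.
lra.
Qed.

Lemma diag_sum_ray F (d : int) a b :
  d = b%:Z - a%:Z -> (n.-1 <= a + b <= n)%N ->
  \sum_(x : pt n | inP x && (x.2%:Z - x.1%:Z == d)) F x = ray_sum F a b.
Proof.
move=> -> /andP[ab_lo ab_hi]; rewrite /ray_sum.
under [RHS]eq_bigr do rewrite extend_sum.
rewrite (exchange_big_dep (fun x : pt n => inP x && (x.2%:Z - x.1%:Z == b%:Z - a%:Z))) /=;
  last first.
  move=> t x _; rewrite pt_at_eq_some /inP => /andP[/eqP <- /eqP <-].
  by apply/andP; split; [|apply/eqP]; lia.
apply: eq_bigr => x /andP[x_in_P /eqP x_diag]; rewrite /inP in x_in_P.
have t_lt_n : (x.1 - a < n)%N by have := ltn_ord x.1; lia.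
rewrite (big_pred1 (Ordinal t_lt_n)) // => t; rewrite /= pt_at_eq_some.
apply/andP/eqP => [[/eqP h1 /eqP h2] | ->]; first by apply: val_inj => /=; lia.
by split; apply/eqP => /=; lia.
Qed.

End Extension.

Arguments pt_at {n}.
Arguments pt_atP {n}.

Section Ideal.
Variables (R : realType) (n : nat) (I : {set pt n}).
Hypothesis I_ideal : is_ideal I.

Definition in_at (a b : nat) : bool := oapp (mem I) false (pt_at a b).

Lemma in_at_pt (x : pt n) : in_at x.1 x.2 = (x \in I).
Proof. by rewrite /in_at pt_at_coords. Qed.

Lemma in_at_out a b : (n <= a)%N || (n <= b)%N -> in_at a b = false.
Proof.
by rewrite /in_at; case: pt_atP => // x <- <-; have := ltn_ord x.1; have := ltn_ord x.2; lia.
Qed.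

Lemma extend_ind a b : extend (fun x => ind R x I) a b = (in_at a b)%:R.
Proof. by rewrite /extend /in_at; case: pt_at. Qed.

Lemma in_at_down a' b' a b :
  in_at a' b' -> (a <= a')%N -> (b <= b')%N -> (n.-1 <= a + b)%N -> in_at a b.
Proof.
rewrite /in_at; case: (pt_atP a' b') => // y <- <- /= yI ha hb hab.
case: pt_atP => [x hx1 hx2 /= | ]; last by have := ltn_ord y.1; have := ltn_ord y.2; lia.
by apply: (I_ideal.2 y) => //; rewrite /inP /ple hx1 hx2 ?ha ?hb.
Qed.

Lemma extend_Tminus a b : (n.-1 <= a + b)%N ->
  extend (fun x => Tminus R x I) a b =
  (in_at a b && ~~ in_at a b.+1 && ~~ in_at a.+1 b)%:R.
Proof.
rewrite /extend; case: pt_atP => [x <- <- hab | out _] /=; last by rewrite in_at_out.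
rewrite /Tminus in_at_pt -andbA; congr (nat_of_bool _)%:R; case: (x \in I) => //=.
apply/forallP/andP => [x_max | [/negP no_up /negP no_right] y].
- split; apply/negP; rewrite /in_at; case: pt_atP => // y h1 h2 /= yI;
    have := x_max y; rewrite yI /ple h1 h2 pt_eqE h1 h2 /=; lia.
- apply/implyP => /andP[]; rewrite -in_at_pt => yI /andP[h1 h2].
  have [lt1 | le1] := ltnP x.1 y.1.
    by case: no_right; apply: (in_at_down yI) => //; lia.
  have [lt2 | le2] := ltnP x.2 y.2.
    by case: no_up; apply: (in_at_down yI) => //; lia.
  by rewrite pt_eqE !eqn_leq le1 le2 h1 h2.
Qed.

Lemma extend_Tplus a b : (n.-1 <= a + b)%N ->
  extend (fun x => Tplus R x I) a.+1 b.+1 =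
  (~~ in_at a.+1 b.+1 && in_at a b.+1 && in_at a.+1 b)%:R.
Proof.
rewrite /extend; case: pt_atP => [x h1 h2 hab | out _] /=; last first.
  by case/orP: out => out;
    [rewrite [in_at a.+1 b]in_at_out ?out | rewrite [in_at a b.+1]in_at_out ?out ?orbT];
    rewrite ?andbF.
rewrite /Tplus -h1 -h2 in_at_pt -!andbA; have -> : inP x by rewrite /inP; lia.
congr (nat_of_bool _)%:R; case: (x \in I) => //=.
apply/forallP/andP => [x_min | [left_in down_in] [y1 y2]].
- split; rewrite /in_at; (case: pt_atP => [y g1 g2 /= | out];
    [apply/negPn/negP => yI; have := x_min y;
     rewrite yI /inP /ple g1 g2 pt_eqE g1 g2 h1 h2 /=; lia
    | by have := ltn_ord x.1; have := ltn_ord x.2; lia]).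
- apply/implyP => /andP[/andP[yP /negP yI] /andP[/= h1' h2']]; rewrite /inP /= in yP.
  have [lt1 | le1] := ltnP y1 x.1.
    by case: yI; rewrite -in_at_pt; apply: (in_at_down left_in) => /=; lia.
  have [lt2 | le2] := ltnP y2 x.2.
    by case: yI; rewrite -in_at_pt; apply: (in_at_down down_in) => /=; lia.
  by rewrite pt_eqE !eqn_leq le1 le2 h1' h2'.
Qed.

Lemma extend_Tplus_antidiag a b : (0 < n)%N -> (a + b)%N = n.-1 ->
  extend (fun x => Tplus R x I) a b = 1 - (in_at a b)%:R.
Proof.
move=> n_gt0; rewrite /extend; case: pt_atP => [x <- <- hab | out]; last lia.
rewrite /= /Tplus in_at_pt; have -> : inP x by rewrite /inP hab.
have -> : [forall y, inP y && (y \notin I) && ple y x ==> (y == x)].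
  apply/forallP => -[y1 y2]; apply/implyP => /andP[/andP[yP _] /andP[/= h1 h2]].
  by rewrite /inP /= in yP; rewrite pt_eqE /=; apply/andP; split; apply/eqP; lia.
by case: (x \in I); rewrite /= ?subrr ?subr0.
Qed.

Lemma extend_ind_square a b : (n.-1 <= a + b)%N ->
  extend (fun x => ind R x I) a.+1 b.+1 + extend (fun x => ind R x I) a b
  - extend (fun x => ind R x I) a b.+1 - extend (fun x => ind R x I) a.+1 b =
  extend (fun x => Tminus R x I) a b - extend (fun x => Tplus R x I) a.+1 b.+1.
Proof.
move=> hab; rewrite !extend_ind extend_Tminus // extend_Tplus //.
have up_left : in_at a.+1 b.+1 -> in_at a b.+1 by move/in_at_down; apply; lia.
have up_down : in_at a.+1 b.+1 -> in_at a.+1 b by move/in_at_down; apply; lia.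
have left_base : in_at a b.+1 -> in_at a b by move/in_at_down; apply; lia.
have down_base : in_at a.+1 b -> in_at a b by move/in_at_down; apply; lia.
move: up_left up_down left_base down_base.
by case: (in_at a.+1 b.+1); case: (in_at a b); case: (in_at a b.+1);
  case: (in_at a.+1 b) => //= *; lra.
Qed.

Lemma ray_sum_square a b : (n.-1 <= a + b)%N ->
  ray_sum (fun x => ind R x I) a.+1 b.+1 + ray_sum (fun x => ind R x I) a b
  - ray_sum (fun x => ind R x I) a b.+1 - ray_sum (fun x => ind R x I) a.+1 b =
  ray_sum (fun x => Tminus R x I) a b - ray_sum (fun x => Tplus R x I) a.+1 b.+1.
Proof.
move=> hab; rewrite /ray_sum -big_split -!sumrB; apply: eq_bigr => t _.
by rewrite !addSn extend_ind_square //; lia.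
Qed.

End Ideal.

Theorem theorem3p28 (R : realType) (n : nat) (k : int) :
  (1 <= n)%N ->
  (exists m : nat, (m < n)%N /\ k = (n.-1)%:Z - (2 * m)%:Z) ->
  toggle_equiv
    (fun I : {set pt n} =>
       2 * diag_sum R k I - diag_sum R (k - 1) I - diag_sum R (k + 1) I)
    (fun _ => 1).
Proof.
move=> n_gt0 [m [m_lt_n k_def]].
exists (fun x : pt n => if x.2%:Z - x.1%:Z == k then -1 else 0) => I I_ideal.
under eq_bigr do rewrite (fun_if (fun c => c * _)) mulN1r mul0r.
rewrite -big_mkcondr sumrN /diag_sum.
set j := (n.-1 - m)%N.
rewrite !(@diag_sum_ray R n _ k m j) ?(@diag_sum_ray R n _ (k - 1) m.+1 j)
  ?(@diag_sum_ray R n _ (k + 1) m j.+1) ?ray_sumB; try (apply/andP; split); try lia.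
have hmj : (n.-1 <= m + j)%N by lia.
have := ray_sum_square R I_ideal hmj.
rewrite !ray_sum_succ extend_Tplus_antidiag ?extend_ind //; try lia.
lra.
Qed.
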